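(* Let $\mu$ be an $E_2$-invariant Borel probability measure on $\mathbb{T}$ with $\mathrm{supp}(\mu)\subset F$ for some flower $F$ for $E_2$, and let $P$ be the petal of $F$ containing $0$. If $\mu(P)>0$, then $\mu(\{0\})>0$.
   Context: $\mathbb{T}=\mathbb{R}/\mathbb{Z}$, $E_2(x)=2x\bmod1$. A preimage selector for $E_2$ is a map $\eta:\mathbb{T}\to\mathbb{T}$ with $E_2(\eta(x))=x$ for all $x$, having finitely many discontinuities, each a jump discontinuity (both one-sided limits exist, differ, and one equals the value). A flower is $\overline{\eta(\mathbb{T})}$ for a preimage selector $\eta$; its connected components (closed intervals) are its petals. *)

(* The circle T = R/Z is modelled through
   Z-periodic lifts to R and the representative interval [0,1). *)
From HB Require Import structures.
From mathcomp Require Import all_boot all_order all_algebra.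
From mathcomp Require Import all_classical all_reals all_analysis.
Set Implicit Arguments. Unset Strict Implicit. Unset Printing Implicit Defensive.
Import Order.TTheory GRing.Theory Num.Theory.
Import numFieldNormedType.Exports.
Local Open Scope classical_set_scope.
Local Open Scope ring_scope.

Section Circle.
Variable R : realType.

Definition frac (x : R) : R := x - (Num.floor x)%:~R.

Definition E2 (x : R) : R := frac (2 * x).

Definition dT (x y : R) : R := Num.min (frac (x - y)) (1 - frac (x - y)).

Definition I01 : set R := [set x | 0 <= x < 1].

(* f : R -> R is assumed 1-periodic, so it denotes a map T -> T (values mod 1) *)
Definition Tcont (f : R -> R) (x : R) : Prop :=
  forall e, 0 < e -> exists2 d, 0 < d &
    forall y, dT x y < d -> dT (f x) (f y) < e.

Definition Tleft_lim (f : R -> R) (x L : R) : Prop :=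
  forall e, 0 < e -> exists2 d, 0 < d &
    forall h, 0 < h < d -> dT (f (x - h)) L < e.

Definition Tright_lim (f : R -> R) (x L : R) : Prop :=
  forall e, 0 < e -> exists2 d, 0 < d &
    forall h, 0 < h < d -> dT (f (x + h)) L < e.

Definition jump_at (f : R -> R) (x : R) : Prop :=
  exists L Rl, [/\ Tleft_lim f x L, Tright_lim f x Rl,
                   frac L <> frac Rl &
                   frac L = frac (f x) \/ frac Rl = frac (f x)].

Definition preimage_selector (eta : R -> R) : Prop :=
  [/\ (forall x, eta (x + 1) = eta x),
      (forall x, E2 (eta x) = frac x),
      (exists s : seq R, forall x, I01 x -> ~ Tcont eta x -> x \in s) &
      (forall x, ~ Tcont eta x -> jump_at eta x)].

(* lift to R (Z-periodic set) of a subset of T given by its representatives *)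
Definition liftT (A : set R) : set R := [set y | A (frac y)].

(* Z-periodic lift of the flower  closure(eta(T))  (closure in R of the lift
   of eta(T), which is the lift of the closure in T) *)
Definition flower_of (eta : R -> R) : set R :=
  closure [set y | exists x, frac y = frac (eta x)].

Definition is_flower (F : set R) : Prop :=
  exists2 eta, preimage_selector eta & F = flower_of eta.

(* the petal of F containing 0, as a subset of the representatives [0,1):
   the image in T of the connected component of 0 in the lift of F *)
Definition petal0 (F : set R) : set R :=
  [set y | I01 y /\ exists2 z, connected_component F 0 z & frac z = y].

(* a Borel probability measure on T, as a measure on R carried by [0,1) *)
Definition T_probability (mu : {measure set R -> \bar R}) : Prop :=
  mu I01 = 1%E /\ mu (~` I01) = 0%E.

Definition E2_invariant (mu : {measure set R -> \bar R}) : Prop :=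
  forall A, measurable A -> A `<=` I01 -> mu (E2 @^-1` A `&` I01) = mu A.

Definition supp_subset (mu : {measure set R -> \bar R}) (F : set R) : Prop :=
  forall x, I01 x -> ~ F x ->
    exists2 e, 0 < e & mu [set y | I01 y /\ dT x y < e] = 0%E.

End Circle.

(* A point y of the image of eta satisfies y = eta (2 y) mod 1.  Hence, if the
   flower F contains a whole neighbourhood of z, both one-sided limits of eta at
   2 z equal z, so eta is continuous at 2 z, and then no point of F lies near the
   antipode z + 1/2: eta would send it near z.  The petal C of 0 is an interval
   containing 0, which by this lies in (-1, 1).  Cut C \ {0} into the dyadic
   shells {x in C | 2^-(n+1) < +-x <= 2^-n}.  The E2-preimage of a shell is its
   half, which lies in the next shell, together with the antipode of that half,
   which misses F and is thus mu-null.  By invariance the disjoint shells have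
   nondecreasing measures; as mu is finite they are all null, so mu(C) = mu{0}. *)

From Pilot Require Import Defs.
From HB Require Import structures.
From mathcomp Require Import all_boot all_order all_algebra.
From mathcomp Require Import all_classical all_reals all_analysis.
From mathcomp Require Import ring lra zify.
Import Order.TTheory GRing.Theory Num.Theory.
Import numFieldNormedType.Exports.
Local Open Scope classical_set_scope.
Local Open Scope ring_scope.
Local Notation frac := (@Defs.frac _).
Local Notation I01 := (@Defs.I01 _).

Section Circle.
Context {R : realType}.
Implicit Types (x y z : R) (k : int).

Lemma intr_leN1_or_ge0 k : k%:~R <= -1 :> R \/ 0 <= k%:~R :> R.
Proof.
have [k0|k0] := ltP k 0; [left|right]; last by rewrite ler0z.
by rewrite -(mulrN1z 1) ler_int -ltzD1.
Qed.

Lemma intr_norm_lt1_eq0 k : `|k%:~R : R| < 1 -> k = 0.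
Proof. by rewrite -intr_norm ltrz1 => k1; apply/eqP; rewrite -normr_le0 -ltzD1. Qed.

Lemma frac_ge0_lt1 x : 0 <= frac x < 1.
Proof. by rewrite /Defs.frac subr_ge0 ltrBlDr addrC -intrD1 floor_le floorD1_gt. Qed.

Lemma frac_addz x k : frac (x + k%:~R) = frac x.
Proof. by rewrite /Defs.frac floorDrz ?intr_int // intrKfloor intrD opprD addrACA subrr addr0. Qed.

Lemma frac_eqP x y : frac x = frac y <-> exists k, x = y + k%:~R.
Proof.
split=> [|[k ->]]; last exact: frac_addz.
rewrite /Defs.frac => e; exists (Num.floor x - Num.floor y); rewrite intrB; lra.
Qed.

Lemma frac_id x : 0 <= x < 1 -> frac x = x.
Proof. by move=> x01; rewrite /Defs.frac (floor_def (x := x) (m := 0)) ?subr0 // add0r. Qed.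

Lemma dT_le_norm x y k : dT x y <= `|x - y - k%:~R|.
Proof.
rewrite /dT ge_min; have /andP[f0 f1] := frac_ge0_lt1 (x - y).
have e : x - y - k%:~R = frac (x - y) + (Num.floor (x - y) - k)%:~R.
  by rewrite intrB /Defs.frac; ring.
rewrite e; have [h|h] := intr_leN1_or_ge0 (Num.floor (x - y) - k).
  by apply/orP; right; rewrite ler0_norm; lra.
by apply/orP; left; rewrite ger0_norm; lra.
Qed.

Lemma dT_norm x y : exists k, dT x y = `|x - y - k%:~R|.
Proof.
have /andP[f0 f1] := frac_ge0_lt1 (x - y).
have e : x - y = frac (x - y) + (Num.floor (x - y))%:~R by rewrite /Defs.frac; ring.
rewrite /dT; case: (leP (frac (x - y)) (1 - frac (x - y))) => h.
  by exists (Num.floor (x - y)); rewrite {2}e ger0_norm; lra.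
exists (Num.floor (x - y) + 1); rewrite {2}e intrD ler0_norm; lra.
Qed.

Lemma dT_ge0 x y : 0 <= dT x y.
Proof. by have [k ->] := dT_norm x y. Qed.

Lemma dT_le_abs x y : dT x y <= `|x - y|.
Proof. by have := dT_le_norm x y 0; rewrite subr0. Qed.

Lemma dT_sym x y : dT x y = dT y x.
Proof.
suff le (a b : R) : dT a b <= dT b a by apply/eqP; rewrite eq_le !le.
have [k ->] := dT_norm b a; apply: le_trans (dT_le_norm a b (- k)) _.
by rewrite (_ : a - b - (- k)%:~R = - (b - a - k%:~R)) ?normrN // intrN; ring.
Qed.

Lemma dT_triangle x y z : dT x z <= dT x y + dT y z.
Proof.
have [k1 ->] := dT_norm x y; have [k2 ->] := dT_norm y z.
apply: le_trans (dT_le_norm x z (k1 + k2)) _.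
by rewrite intrD (_ : x - z - _ = (x - y - k1%:~R) + (y - z - k2%:~R)) ?ler_normD //; ring.
Qed.

Lemma dT_fracl x x' y : frac x = frac x' -> dT x y = dT x' y.
Proof. by case/frac_eqP=> k ->; rewrite /dT addrAC frac_addz. Qed.

Lemma dT_eq0 x y : dT x y = 0 -> frac x = frac y.
Proof. by have [k ->] := dT_norm x y => /normr0_eq0 e; apply/frac_eqP; exists k; lra. Qed.

Lemma dT_ltP x y e : dT x y < e <-> exists k, `|x - y - k%:~R| < e.
Proof.
split; first by have [k ->] := dT_norm x y; exists k.
by case=> k; apply: le_lt_trans (dT_le_norm _ _ k).
Qed.

Lemma dT_antipodal x k : 2^-1 <= dT x (x + 2^-1 + k%:~R).
Proof.
have [j ->] := dT_norm x (x + 2^-1 + k%:~R).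
rewrite (_ : _ - _ - _ = - (2^-1 + (k + j)%:~R)); last by rewrite intrD; ring.
rewrite normrN; have [h|h] := intr_leN1_or_ge0 (k + j).
  by rewrite ler0_norm; lra.
by rewrite ger0_norm; lra.
Qed.

End Circle.

Lemma closure_approx {R : realType} {A : set R} {p r : R} :
  closure A p -> 0 < r -> exists2 y, A y & `|p - y| < r.
Proof.
move=> Ap r0; have [y [Ay]] := Ap _ (nbhsx_ballx p r r0).
by rewrite -ball_normE; exists y.
Qed.

Section Selector.
Context {R : realType} {eta : R -> R}.
Hypothesis eta_sel : preimage_selector eta.
Implicit Types (x y z : R) (k : int).
Let F := flower_of eta.

Lemma eta_addz x k : eta (x + k%:~R) = eta x.
Proof.
have [eta1 _ _ _] := eta_sel.
have eta_addn n x' : eta (x' + n%:R) = eta x'.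
  by elim: n => [|n IHn]; rewrite ?addr0 // -natr1 addrA eta1 IHn.
case: k => n; first exact: eta_addn.
by rewrite NegzE mulrNz -[in RHS](subrK n.+1%:R x) eta_addn.
Qed.

Lemma image_eta_double y :
  (exists x, frac y = frac (eta x)) -> frac y = frac (eta (2 * y)).
Proof.
case=> x /frac_eqP[k yk]; have [_ /(_ x)/frac_eqP[j ej] _ _] := eta_sel.
rewrite yk frac_addz (_ : 2 * _ = x + (j + k + k)%:~R) ?eta_addz //.
by move: ej; rewrite !intrD => ej; lra.
Qed.

Section FlowerNeighbourhood.
Variables (z eps : R).
Hypotheses (eps_gt0 : 0 < eps) (ballF : forall p, `|p - z| < eps -> F p).

Lemma one_sided_limit_frac (s L : R) : s = 1 \/ s = -1 ->
  (forall e, 0 < e -> exists2 d, 0 < d &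
     forall h, 0 < h < d -> dT (eta (2 * z + s * h)) L < e) ->
  frac L = frac z.
Proof.
move=> s1 lim; have ss : s * s = 1 by case: s1 => ->; rewrite ?mulrNN mulr1.
have ns : `|s| = 1 by case: s1 => ->; rewrite ?normrN normr1.
apply/dT_eq0/eqP; rewrite eq_le dT_ge0 andbT; apply/ler_addgt0Pr => e e0.
have e2 : 0 < e / 2 by lra.
have [d d0 limd] := lim _ e2.
have [h0 [h00 h0d h0eps h0e]] :
    exists h0, [/\ 0 < h0, 8 * h0 <= d, 8 * h0 <= eps & 8 * h0 <= e].
  exists (Num.min d (Num.min eps e) / 8).
  have : 0 < Num.min d (Num.min eps e) by rewrite !lt_min d0 eps_gt0 e0.
  have : Num.min d (Num.min eps e) <= d by rewrite ge_min lexx.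
  have : Num.min d (Num.min eps e) <= eps by rewrite !ge_min lexx orbT.
  have : Num.min d (Num.min eps e) <= e by rewrite !ge_min lexx !orbT.
  split; lra.
have [y Sy py] : exists2 y, (exists x, frac y = frac (eta x)) &
    `|z + s * (2 * h0) - y| < h0.
  apply: closure_approx; last lra.
  by apply: ballF; rewrite addrAC subrr add0r normrM ns mul1r ger0_norm; lra.
pose w := s * (y - (z + s * (2 * h0))).
have /andP[w_lo w_hi] : - h0 < w < h0 by rewrite -ltr_norml normrM ns mul1r distrC.
have ew : s * (2 * y - 2 * z) = 2 * w + 4 * h0.
  by transitivity (2 * w + s * s * (4 * h0)); [rewrite /w; ring | rewrite ss mul1r].
have L_near : dT (eta (2 * y)) L < e / 2.
  rewrite (_ : 2 * y = 2 * z + s * (s * (2 * y - 2 * z))).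
    by apply: limd; rewrite ew; lra.
  by rewrite mulrA ss mul1r; ring.
have z_near : dT (eta (2 * y)) z < e / 2.
  rewrite -(dT_fracl _ _ z (image_eta_double _ Sy)); apply: le_lt_trans (dT_le_abs _ _) _.
  rewrite (_ : y - z = s * (w + 2 * h0)); last by rewrite /w mulrDr mulrA ss; ring.
  by rewrite normrM ns mul1r ger0_norm; lra.
rewrite add0r; apply: le_trans (dT_triangle _ (eta (2 * y)) _) _.
by rewrite dT_sym; lra.
Qed.

Lemma eta_cont_double : Tcont eta (2 * z).
Proof.
apply: contrapT => discont; have [_ _ _ /(_ _ discont)] := eta_sel.
case=> L [Rl [left_lim right_lim + _]]; apply.
have -> : frac L = frac z.
  apply: (@one_sided_limit_frac (-1)); first by right.
  by move=> e /left_lim[d d0 hd]; exists d => // h; rewrite mulN1r; exact: hd.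
symmetry; apply: (@one_sided_limit_frac 1); first by left.
by move=> e /right_lim[d d0 hd]; exists d => // h; rewrite mul1r; exact: hd.
Qed.

Lemma eta_double_frac : frac (eta (2 * z)) = frac z.
Proof.
apply: (@one_sided_limit_frac 1); first by left.
move=> e /eta_cont_double[d d0 hd]; exists d => // h /andP[h0 hd'].
rewrite dT_sym mul1r; apply: hd; apply: le_lt_trans (dT_le_abs _ _) _.
by rewrite opprD addNKr normrN ger0_norm ?ltW.
Qed.

Lemma antipode_notin_flower k : ~ F (z + 2^-1 + k%:~R).
Proof.
set a := z + 2^-1 + k%:~R => Fa.
have q0 : (0 : R) < 4^-1 by lra.
have [d d0 hd] := eta_cont_double _ q0.
have [r [r0 rd r16]] : exists r, [/\ 0 < r, 2 * r <= d & 16 * r <= 1].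
  exists (Num.min d 1 / 16).
  have : 0 < Num.min d 1 by rewrite lt_min d0 ltr01.
  have : Num.min d 1 <= d by rewrite ge_min lexx.
  have : Num.min d 1 <= 1 by rewrite ge_min lexx orbT.
  split; lra.
have [y Sy ay] := closure_approx Fa r0.
have near_2y : dT (2 * z) (2 * y) < d.
  apply: le_lt_trans (dT_le_norm _ _ (- 1 - k - k)) _.
  rewrite (_ : _ - _ - _ = 2 * (a - y)); last by rewrite /a !intrB; field.
  by rewrite normrM ger0_norm; lra.
have yz : dT y z < 4^-1.
  move: (hd _ near_2y); rewrite (dT_fracl _ _ _ eta_double_frac) dT_sym.
  by rewrite -(dT_fracl _ _ _ (image_eta_double _ Sy)).
have := dT_antipodal z k; have := dT_triangle z y a; have := dT_le_abs y a.
by rewrite (dT_sym z y) distrC -/a; lra.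
Qed.

End FlowerNeighbourhood.

Lemma segment_antipode_notin_flower c k : c != 0 ->
  (forall t, 0 <= t <= 1 -> F (t * c)) -> ~ F (c / 2 + 2^-1 + k%:~R).
Proof.
move=> c0 segF; have c_gt0 : 0 < `|c| / 2 by rewrite divr_gt0 ?normr_gt0.
apply: (@antipode_notin_flower (c / 2) _ c_gt0) => p pc.
rewrite -(divfK c0 p); apply: segF.
suff : `|p / c - 2^-1| <= 2^-1 by rewrite ler_distl => /andP[? ?]; apply/andP; lra.
rewrite (_ : p / c - 2^-1 = (p - c / 2) / c); last by field.
by rewrite normrM normfV ler_pdivrMr ?normr_gt0 //; lra.
Qed.

End Selector.

Lemma trivIset_nondecreasing_measure0 d (T : measurableType d) (R : realType)
    (mu : {measure set T -> \bar R}) (A : set T) (B : nat -> set T) :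
  measurable A -> (mu A < +oo)%E -> (forall n, measurable (B n)) ->
  (forall n, B n `<=` A) -> trivIset setT B ->
  (forall n, (mu (B n) <= mu (B n.+1))%E) -> forall n, mu (B n) = 0%E.
Proof.
move=> mA Afin mB BA tB incB n.
have mono : {homo (fun i => mu (B i)) : i j / (i <= j)%N >-> (i <= j)%E}.
  by apply: homo_leq => //; exact: le_trans.
have BnA : (mu (B n) <= mu A)%E by apply: le_measure; rewrite ?inE.
have [r r0 mBn] : exists2 r, 0 <= r & mu (B n) = r%:E.
  have /fineK Bfin : mu (B n) \is a fin_num.
    by rewrite ge0_fin_numE ?measure_ge0 // (le_lt_trans BnA).
  by exists (fine (mu (B n))); rewrite -?lee_fin Bfin ?measure_ge0.
have bound N : ((r *+ N)%:E <= mu A)%E.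
  rewrite -[N]subn0 -sumr_const_nat big_mkord -sumEFin.
  apply: (@le_trans _ _ (\sum_(i < N) mu (B (n + i)%N))%E).
    by apply: lee_sum => i _; rewrite -mBn; apply: mono; exact: leq_addr.
  have tBn : trivIset setT (fun i => B (n + i)%N).
    by move=> i j _ _ /(tB _ _ I I)/addnI.
  rewrite -(@measure_bigsetU _ _ _ mu (fun i => B (n + i)%N)) //.
  apply: le_measure; rewrite ?inE //; first exact: bigsetU_measurable.
  by move=> x /(@bigsetU_bigcup T (fun i => B (n + i)%N) N)[i _ /BA].
have /fineK AM : mu A \is a fin_num by rewrite ge0_fin_numE ?measure_ge0.
rewrite mBn; congr EFin; apply/eqP; rewrite eq_le r0 andbT leNgt; apply/negP => r_gt0.
have := bound (Num.truncn (fine (mu A) / r)).+1; rewrite -AM lee_fin -mulr_natr.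
have := truncnS_gt (fine (mu A) / r); rewrite ltr_pdivrMr // => lt; lra.
Qed.

Section ModZ.
Context {R : realType}.
Implicit Types (A : set R) (x y : R) (k : int).

Definition modZ A : set R := [set y | I01 y /\ exists k, A (y + k%:~R)].

Lemma measurable_affine_preimage (f : R -> R) (a b : R) A :
  f =1 (fun x => a * x + b) -> measurable A -> measurable [set x | A (f x)].
Proof.
move=> fE mA; rewrite (_ : [set x | _] = [set x | A (a * x + b)]); last first.
  by apply/seteqP; split=> x; rewrite /= fE.
rewrite -[X in measurable X]setTI; apply: (measurable_realfun.measurable_funD
  (measurable_realfun.measurable_funM (measurable_cst a) (@measurable_id _ _ _))
  (measurable_cst b)) => //.
Qed.

Lemma I01_measurable : measurable (I01 : set R).
Proof.
apply: measurable_realfun.is_interval_measurable => x y /andP[x0 _] /andP[_ y1] z.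
by move=> /andP[xz zy]; apply/andP; lra.
Qed.

Lemma modZ_measurable A : measurable A -> measurable (modZ A).
Proof.
move=> mA; have shift_m (b : R) : measurable [set y | A (y + b)].
  by apply: (@measurable_affine_preimage _ 1 b) => // y; rewrite mul1r.
rewrite (_ : modZ A = I01 `&` \bigcup_n
    ([set y | A (y + n%:R)] `|` [set y | A (y + - n%:R)])).
  by apply: measurableI; [exact: I01_measurable | apply: bigcupT_measurable => n;
    apply: measurableU; exact: shift_m].
apply/seteqP; split=> [y [y01 [[n|n] Ak]]|y [y01 [n _ [Ak|Ak]]]]; split=> //.
- by exists n => //; left.
- by exists n.+1 => //; right; move: Ak; rewrite NegzE mulrNz.
- by exists n.
- by exists (- n%:Z); rewrite intrN.
Qed.

Lemma modZ_dT_ball x e : [set y | I01 y /\ dT x y < e] = modZ [set u | `|u - x| < e].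
Proof.
apply/seteqP; split=> y [y01 near]; split=> //.
  have [k xyk] := (dT_ltP _ _ _).1 near; exists k.
  by rewrite /= (_ : y + k%:~R - x = - (x - y - k%:~R)) ?normrN //; ring.
apply/dT_ltP; case: near => k yk; exists k.
by rewrite (_ : x - y - k%:~R = - (y + k%:~R - x)) ?normrN //; ring.
Qed.

Lemma E2_preimage_modZ A :
  @E2 R @^-1` modZ A `&` I01 = modZ [set u | A (2 * u)] `|` modZ [set u | A (2 * u + 1)].
Proof.
have E2E x : E2 x = 2 * x - (Num.floor (2 * x))%:~R by [].
apply/seteqP; split=> [x [[_ [k Ak]] x01]|x [[x01 [k Ak]]|[x01 [k Ak]]]].
- pose j := k - Num.floor (2 * x).
  have ej : E2 x + k%:~R = 2 * x + j%:~R by rewrite E2E /j intrB; ring.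
  have [jE|jE] : j = 2 * (j %/ 2)%Z \/ j = 2 * (j %/ 2)%Z + 1 by lia.
  + left; split=> //; exists (j %/ 2)%Z.
    by rewrite /= (_ : 2 * _ = E2 x + k%:~R) // ej [in RHS]jE intrM; ring.
  + right; split=> //; exists (j %/ 2)%Z.
    by rewrite /= (_ : 2 * _ + 1 = E2 x + k%:~R) // ej [in RHS]jE intrD intrM; ring.
- split=> //; split; first exact: frac_ge0_lt1.
  exists (Num.floor (2 * x) + 2 * k); rewrite E2E intrD intrM.
  by move: Ak; rewrite /= mulrDr; congr A; ring.
- split=> //; split; first exact: frac_ge0_lt1.
  exists (Num.floor (2 * x) + 2 * k + 1); rewrite E2E !intrD intrM.
  by move: Ak; rewrite /= mulrDr; congr A; ring.
Qed.

Lemma supp_subset_negligible (mu : {measure set R -> \bar R}) (F : set R) :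
  supp_subset mu F -> mu.-negligible (I01 `&` ~` F).
Proof.
move=> suppF.
(* Countably many rational balls, each inside a null neighbourhood, cover. *)
pose B (p : rat * rat) : set R := [set y | I01 y /\ `|y - ratr p.1| < ratr p.2].
pose G n : set R := if unpickle n is Some p then [set y | mu.-negligible (B p) /\ B p y]
            else set0.
have G_negligible n : mu.-negligible (G n).
  rewrite /G; case: (unpickle n) => [p|]; last exact: negligible_set0.
  have [Bp|nBp] := pselect (mu.-negligible (B p)).
    by apply: negligibleS Bp => y [].
  by apply: negligibleS (negligible_set0 mu) => y [/nBp].
apply: negligibleS (negligible_bigcup G_negligible) => x [x01 Fx].
have [e e0 ball0] := suppF x x01 Fx.
have rat_between (u v : R) : u < v -> exists q : rat, u < ratr q < v.
  by move=> uv; have [q] := rat_in_itvoo uv; rewrite in_itv /=; exists q.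
have [a /andP[ax xa]] : exists a : rat, x - e / 4 < ratr a < x + e / 4.
  by apply: rat_between; lra.
have [b /andP[eb be]] : exists b : rat, e / 4 < ratr b < e / 2.
  by apply: rat_between; lra.
exists (pickle (a, b)); first by [].
rewrite /G pickleK; split; last first.
  by split; last by rewrite ltr_distl; apply/andP; lra.
exists [set y | I01 y /\ dT x y < e]; split=> //.
  rewrite modZ_dT_ball; apply: modZ_measurable.
  apply: measurable_realfun.is_interval_measurable => u v /=.
  rewrite !ltr_distl => /andP[? ?] /andP[? ?] w /andP[? ?].
  by rewrite ltr_distl; apply/andP; lra.
move=> y [y01 /=]; rewrite ltr_distl => /andP[ya ay]; split=> //.
by apply: le_lt_trans (dT_le_abs _ _) _; rewrite ltr_distl; apply/andP; lra.
Qed.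

End ModZ.

Section HalfPowers.
Context {R : realType}.
Local Notation half := (2^-1 : R).

Lemma half_gt0 : 0 < half. Proof. by rewrite invr_gt0 ltr0n. Qed.

Lemma half_lt1 : half < 1. Proof. by rewrite invf_lt1 ?ltr0n // ltr1n. Qed.

Lemma half_pow_shell_inj (t : R) n m :
  half ^+ n.+1 < t <= half ^+ n -> half ^+ m.+1 < t <= half ^+ m -> n = m.
Proof.
move=> /andP[nt tn] /andP[mt tm]; apply/eqP; rewrite eqn_leq.
by rewrite -ltnS -(ltr_iXn2l half_gt0 half_lt1) -ltnS -(ltr_iXn2l half_gt0 half_lt1)
  (lt_le_trans nt tm) (lt_le_trans mt tn).
Qed.

Lemma half_pow_shell (t : R) : 0 < t <= 1 -> exists n, half ^+ n.+1 < t <= half ^+ n.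
Proof.
move=> /andP[t0 t1].
have [N tN] : exists N, half ^+ N < t.
  exists (Num.bound t^-1); rewrite exprVn -[X in _ < X]invrK ltf_pV2 ?posrE ?invr_gt0 //.
    exact: upper_nthrootP.
elim: N tN => [|N IHN] tN; first by rewrite expr0 in tN; lra.
by case: (ltP (half ^+ N) t) => [/IHN //|tN']; exists N; rewrite tN.
Qed.

End HalfPowers.

Lemma petal0_modZ {R : realType} (F : set R) :
  petal0 F = modZ (connected_component F 0).
Proof.
apply/seteqP; split=> y.
  case=> y01 [z Cz zy]; split=> //; exists (Num.floor z).
  by rewrite -zy /Defs.frac subrK.
case=> y01 [k Ck]; split=> //; exists (y + k%:~R) => //.
by rewrite frac_addz frac_id.
Qed.

Section Petal.
Context {R : realType} {eta : R -> R}.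
Hypothesis eta_sel : preimage_selector eta.
Local Notation half := (2^-1 : R).
Let F := flower_of eta.
Let C := connected_component F 0.

Lemma petal_interval : is_interval C.
Proof. exact/connected_intervalP/component_connected. Qed.

Lemma petal_sub_flower : C `<=` F.
Proof. exact: connected_component_sub. Qed.

Lemma petal_scale c t : C c -> 0 <= t <= 1 -> C (t * c).
Proof.
move=> Cc /andP[t0 t1].
have C0 : C 0 by case: Cc => B [B0 BF _] _; apply: connected_component_refl; exact: BF.
have [c0|c0] := leP 0 c.
  by apply: (petal_interval _ _ C0 Cc); apply/andP; split; nra.
by apply: (petal_interval _ _ Cc C0); apply/andP; split; nra.
Qed.

Lemma petal_lt1 c : C c -> `|c| < 1.
Proof.
move=> Cc; rewrite ltNge; apply/negP => c1.
have no_unit (u : R) k : C u -> u != 0 -> u / 2 + half + k%:~R = 0 -> False.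
  move=> Cu u0 u_half; apply: (segment_antipode_notin_flower eta_sel u k u0).
    by move=> t t01; apply/petal_sub_flower/petal_scale.
  by rewrite u_half -(mul0r u); apply/petal_sub_flower/petal_scale; rewrite ?lexx ?ler01.
have c0 : c != 0 by apply: contraTneq c1 => ->; rewrite normr0 ler10.
move: c1; rewrite ler_normr => /orP[c1|c1].
  apply: (no_unit 1 (-1)); last by rewrite mulrN1z; field.
    rewrite -(mulVf c0); apply: petal_scale => //.
    by apply/andP; split; [rewrite invr_ge0; lra | rewrite invf_le1; lra].
  exact: oner_neq0.
apply: (no_unit (-1) 0); last by rewrite addr0; field.
  rewrite -(mulVf c0) -mulNr; apply: petal_scale => //.
  by apply/andP; split; [rewrite oppr_ge0 invr_le0; lra | rewrite -invrN invf_le1; lra].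
by rewrite oppr_eq0 oner_neq0.
Qed.

Definition petal_shell (s : R) (n : nat) : set R :=
  [set x | C x /\ half ^+ n.+1 < s * x <= half ^+ n].

Variable mu : {measure set R -> \bar R}.
Hypotheses (mu_prob : T_probability mu) (mu_inv : E2_invariant mu)
  (mu_supp : supp_subset mu F).

Section Shells.
Variable s : R.
Hypothesis s_sign : s = 1 \/ s = -1.

Lemma petal_shell_measurable n : measurable (petal_shell s n).
Proof.
apply: measurable_realfun.is_interval_measurable => x y [Cx xn] [Cy yn] z xzy.
split; first exact: (petal_interval _ _ Cx Cy).
move: xn yn xzy; case: s_sign => ->; rewrite !(mul1r, mulN1r).
  by move=> /andP[? ?] /andP[? ?] /andP[? ?]; apply/andP; lra.
by move=> /andP[? ?] /andP[? ?] /andP[? ?]; apply/andP; lra.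
Qed.

Lemma modZ_petal_shell_inj n m y :
  modZ (petal_shell s n) y -> modZ (petal_shell s m) y -> n = m.
Proof.
move=> [_ [k [_ nk]]] [_ [j [_ mj]]]; suff kj : k = j.
  by subst j; exact: half_pow_shell_inj nk mj.
have ns : `|s| = 1 by case: s_sign => ->; rewrite ?normrN normr1.
have unit_shell i : 0 < half ^+ i.+1 /\ half ^+ i <= 1.
  split; first by rewrite exprn_gt0 // half_gt0.
  by apply: exprn_ile1; lra.
have [n0 n1] := unit_shell n; have [m0 m1] := unit_shell m.
move: nk mj => /andP[nk kn] /andP[mj jm].
have : `|s * (y + k%:~R) - s * (y + j%:~R)| < 1 by rewrite ltr_distl; apply/andP; lra.
rewrite (_ : _ - _ = s * (k - j)%:~R); last by rewrite intrB; ring.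
by rewrite normrM ns mul1r => /intr_norm_lt1_eq0/eqP; rewrite subr_eq0 => /eqP.
Qed.

Lemma modZ_petal_shell_le n :
  (mu (modZ (petal_shell s n)) <= mu (modZ (petal_shell s n.+1)))%E.
Proof.
have mS := petal_shell_measurable n.
have m_half : measurable (modZ [set u | petal_shell s n (2 * u)]).
  apply: modZ_measurable; apply: (@measurable_affine_preimage _ _ 2 0 _ _ mS) => u.
  by rewrite addr0.
have m_odd : measurable (modZ [set u | petal_shell s n (2 * u + 1)]).
  exact: modZ_measurable (@measurable_affine_preimage _ _ 2 1 _ (fun=> erefl) mS).
have mZ i := modZ_measurable _ (petal_shell_measurable i).
(* The preimage of the shell is its half, inside the next shell, and the
   antipode of that half, which misses the flower. *)
rewrite -(mu_inv _ (mZ n)); last by move=> y [].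
rewrite E2_preimage_modZ measureU0 //.
  apply: le_measure; rewrite ?inE //.
  move=> y [y01 [k [C2 /andP[lo hi]]]]; split=> //; exists k; split.
    rewrite (_ : y + k%:~R = half * (2 * (y + k%:~R))); last by field.
    by apply: petal_scale => //; apply/andP; lra.
  by rewrite [half ^+ n.+1]exprS [half ^+ n.+2]exprS; apply/andP; lra.
apply/negligibleP => //; apply: negligibleS (supp_subset_negligible _ _ mu_supp).
move=> y [y01 [k [Cx /andP[lo hi]]]]; split=> // Fy.
have x_ne0 : 2 * (y + k%:~R) + 1 != 0.
  by apply: contraTneq lo => ->; rewrite mulr0 -leNgt ltW // exprn_gt0 //; lra.
apply: (segment_antipode_notin_flower eta_sel _ (- k - 1) x_ne0).
  by move=> t t01; apply/petal_sub_flower/petal_scale.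
by rewrite (_ : _ + _ + _ = y) // intrB intrN; field.
Qed.

Lemma modZ_petal_shell_null n : mu (modZ (petal_shell s n)) = 0%E.
Proof.
have [mu_I01 _] := mu_prob; move: n.
apply: (@trivIset_nondecreasing_measure0 _ _ _ mu I01 (fun n => modZ (petal_shell s n))
  I01_measurable).
- by rewrite mu_I01 ltry.
- by move=> n; exact: modZ_measurable _ (petal_shell_measurable n).
- by move=> n y [].
- by move=> n m _ _ [y [yn ym]]; exact: modZ_petal_shell_inj yn ym.
- exact: modZ_petal_shell_le.
Qed.

End Shells.

Lemma modZ_petal_sub_shells :
  modZ C `<=` [set 0] `|` \bigcup_n (modZ (petal_shell 1 n) `|` modZ (petal_shell (-1) n)).
Proof.
move=> y [/andP[y0 y1] [k Ck]]; have [->|yn0] := eqVneq y 0; [by left | right].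
have k_ne : y + k%:~R != 0.
  apply: contra_neq yn0 => yk; have ey : y = - k%:~R by lra.
  suff k0 : k = 0 by rewrite ey k0 oppr0.
  by apply: (@intr_norm_lt1_eq0 R); rewrite -normrN -ey ger0_norm.
have /andP[lo hi] : -1 < y + k%:~R < 1 by rewrite -ltr_norml petal_lt1.
have y01 : I01 y by apply/andP.
move: k_ne; rewrite neq_lt => /orP[neg|pos].
  have [n nk] : exists n, half ^+ n.+1 < - (y + k%:~R) <= half ^+ n.
    by apply: half_pow_shell; apply/andP; lra.
  by exists n => //; right; split=> //; exists k; split; rewrite // mulN1r.
have [n nk] : exists n, half ^+ n.+1 < y + k%:~R <= half ^+ n.
  by apply: half_pow_shell; apply/andP; lra.
by exists n => //; left; split=> //; exists k; split; rewrite // mul1r.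
Qed.

Lemma petal_measure_le_atom : (mu (modZ C) <= mu [set 0%R])%E.
Proof.
pose N := \bigcup_n (modZ (petal_shell 1 n) `|` modZ (petal_shell (-1) n)).
have shell_m s n : s = 1 \/ s = -1 -> measurable (modZ (petal_shell s n)).
  by move=> s1; exact: modZ_measurable _ (petal_shell_measurable _ s1 n).
have shell_null s n : s = 1 \/ s = -1 -> mu.-negligible (modZ (petal_shell s n)).
  by move=> s1; apply/negligibleP; [exact: shell_m | exact: modZ_petal_shell_null _ s1 n].
have mN : measurable N.
  by apply: bigcupT_measurable => n; apply: measurableU; apply: shell_m; [left | right].
have N0 : mu N = 0%E.
  apply: measure_negligible mN (negligible_bigcup _) => n.
  by apply: negligibleU; apply: shell_null; [left | right].
have m0 : measurable [set (0 : R)].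
  by apply: measurable_realfun.is_interval_measurable => x y -> -> z; rewrite -eq_le => /eqP.
rewrite -(measureU0 m0 mN N0); apply: le_measure; rewrite ?inE.
- exact: modZ_measurable _ (measurable_realfun.is_interval_measurable petal_interval).
- exact: measurableU.
- exact: modZ_petal_sub_shells.
Qed.

End Petal.

Theorem proposition4 (R : realType) (mu : {measure set R -> \bar R}) (F : set R) :
  T_probability mu -> E2_invariant mu -> is_flower F -> supp_subset mu F ->
  (0 < mu (petal0 F))%E -> (0 < mu [set (0%R : R)])%E.
Proof.
move=> mu_prob mu_inv [eta eta_sel ->] mu_supp; rewrite petal0_modZ => petal_pos.
exact: lt_le_trans petal_pos (petal_measure_le_atom eta_sel _ mu_prob mu_inv mu_supp).
Qed.
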